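(* Let $\mathcal V \subset B(H)$ be an operator system and $p \in \mathcal V$ be a projection. Set $q = I-p$. Then for every $n \in \mathbb{N}$ and $x \in M_n(\mathcal V)$ we have that $x \in C_n$ if and only if $\begin{pmatrix} x & x \\ x & x \end{pmatrix} \in C(p_n \oplus q_n)$.
   Context: Here $C_n = M_n(\mathcal V) \cap B(H^n)^+$ is the positive cone of $M_n(\mathcal V)$, $p_n = I_n \otimes p$, $q_n = I_n \otimes q$, and $C(p_n \oplus q_n) = \{ y \in M_{2n}(\mathcal V) : y = y^*, \ (p_n \oplus q_n) y (p_n \oplus q_n) \in B(H^{2n})^+\}$, where $M_{2n}(\mathcal V)$ is identified with $M_2(M_n(\mathcal V))$. *)

From HB Require Import structures.
From mathcomp Require Import all_boot all_order all_algebra.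
From mathcomp Require Import complex.
From mathcomp Require Import reals.
Set Implicit Arguments. Unset Strict Implicit. Unset Printing Implicit Defensive.
Import Order.TTheory GRing.Theory Num.Theory.
Local Open Scope ring_scope.

Section OpSys.
Variable R : realType.
Local Notation C := R[i].
Variable H : lmodType C.
Variable ip : H -> H -> C.   (* inner product <x, y>, linear in x *)

Definition is_inner_product : Prop :=
  [/\ (forall (a : C) (x y z : H), ip (a *: x + y) z = a * ip x z + ip y z),
      (forall x y : H, ip y x = (ip x y)^*),
      (forall x : H, 0 <= ip x x) &
      (forall x : H, ip x x = 0 -> x = 0)].

Definition hnorm (x : H) : R := Num.sqrt (complex.Re (ip x x)).

Definition hcomplete : Prop :=
  forall u : nat -> H,
    (forall e : R, 0 < e -> exists N : nat, forall m k : nat,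
        (N <= m)%N -> (N <= k)%N -> hnorm (u m - u k) < e) ->
    exists l : H, forall e : R, 0 < e -> exists N : nat, forall m : nat,
        (N <= m)%N -> hnorm (u m - l) < e.

Definition bounded_op (T : H -> H) : Prop :=
  (forall (a : C) (x y : H), T (a *: x + y) = a *: T x + T y) /\
  exists M : R, forall x : H, hnorm (T x) <= M * hnorm x.

Definition is_adjoint (T S : H -> H) : Prop :=
  forall x y : H, ip (T x) y = ip x (S y).

Definition operator_system (V : (H -> H) -> Prop) : Prop :=
  [/\ (forall T, V T -> bounded_op T),
      V id,
      (forall (a : C) (S T : H -> H), V S -> V T -> V (fun h => a *: S h + T h)) &
      (forall T, V T -> exists2 S, V S & is_adjoint T S)].

Definition projection (p : H -> H) : Prop :=
  (forall h, p (p h) = p h) /\ is_adjoint p p.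

(* operator matrices: elements of M_n(B(H)) acting on H^n *)
Definition opmx_apply (n : nat) (X : 'M[H -> H]_n) (xi : 'I_n -> H) : 'I_n -> H :=
  fun i => \sum_(j < n) X i j (xi j).

Definition opmx_mul (n : nat) (A B : 'M[H -> H]_n) : 'M[H -> H]_n :=
  \matrix_(i, j) (fun h => \sum_(k < n) A i k (B k j h)).

Definition ipn (n : nat) (xi eta : 'I_n -> H) : C := \sum_(i < n) ip (xi i) (eta i).

Definition opmx_pos (n : nat) (X : 'M[H -> H]_n) : Prop :=
  forall xi : 'I_n -> H, 0 <= ipn (opmx_apply X xi) xi.

Definition opmx_selfadj (n : nat) (X : 'M[H -> H]_n) : Prop :=
  forall i j, is_adjoint (X j i) (X i j).

Definition in_Mn (V : (H -> H) -> Prop) (n : nat) (X : 'M[H -> H]_n) : Prop :=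
  forall i j, V (X i j).

Definition Cn (V : (H -> H) -> Prop) (n : nat) (X : 'M[H -> H]_n) : Prop :=
  in_Mn V X /\ opmx_pos X.

(* a_n = I_n (x) a *)
Definition ampl (n : nat) (a : H -> H) : 'M[H -> H]_n :=
  \matrix_(i, j) (if i == j then a else (fun _ => 0)).

Definition zero_opmx (n : nat) : 'M[H -> H]_n := \matrix_(i, j) (fun _ => 0).

(* p_n (+) q_n in M_{2n}(B(H)) = M_2(M_n(B(H))) *)
Definition dsum_opmx (n : nat) (P Q : 'M[H -> H]_n) : 'M[H -> H]_(n + n) :=
  block_mx P (zero_opmx n) (zero_opmx n) Q.

Definition C_of (V : (H -> H) -> Prop) (m : nat) (P : 'M[H -> H]_m) (y : 'M[H -> H]_m) : Prop :=
  [/\ in_Mn V y, opmx_selfadj y & opmx_pos (opmx_mul P (opmx_mul y P))].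

End OpSys.

From HB Require Import structures.
From mathcomp Require Import all_boot all_order all_algebra.
From mathcomp Require Import complex.
From mathcomp Require Import reals.
From mathcomp Require Import ring.
From Stdlib Require Import FunctionalExtensionality.
Import Order.TTheory GRing.Theory Num.Theory.

(* Compressing [[x, x], [x, x]] by [p_n (+) q_n] turns its quadratic form at
   [(z1, z2)] into the quadratic form of [x] at [p z1 + q z2].  As [p + q = 1],
   every vector of [H^n] is of this shape (take [z1 = z2]), so the compression
   is positive exactly when [x] is.  Over complex scalars positivity forces
   [x = x^*] by polarization, which makes the block matrix self-adjoint. *)

Set Implicit Arguments.
Unset Strict Implicit.
Unset Printing Implicit Defensive.
Local Open Scope ring_scope.

Section LinearMaps.
Variables (R : pzRingType) (U V : lmodType R) (T : U -> V).
Hypothesis linT : linear T.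

Lemma linear_map0 : T 0 = 0.
Proof.
have e := linT 1 0 0; rewrite scaler0 addr0 scale1r in e.
by apply/(addrI (T 0)); rewrite addr0 -e.
Qed.

Lemma linear_mapD u v : T (u + v) = T u + T v.
Proof. by rewrite -{1}[u]scale1r linT scale1r. Qed.

Lemma linear_map_sum (I : finType) (f : I -> U) : T (\sum_i f i) = \sum_i T (f i).
Proof. exact: (big_morph T linear_mapD linear_map0). Qed.

End LinearMaps.

Section Polarization.
Variables (R : realType) (U : lmodType R[i]) (b : U -> U -> R[i]).
Hypothesis b_linearl : forall a u v w, b (a *: u + v) w = a * b u w + b v w.
Hypothesis b_semilinearr : forall a u v w, b w (a *: u + v) = a^* * b w u + b w v.

Lemma polarization_hermitian :
  (forall u, (b u u)^* = b u u) -> forall u v, b v u = (b u v)^*.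
Proof.
move=> b_real u v.
have h1 := b_real (1 *: u + v); have h2 := b_real ('i *: u + v).
rewrite !b_linearl !b_semilinearr in h1 h2.
rewrite !(rmorphD, rmorphM) /= !conjCK conjC1 conjCi !b_real !mul1r in h1 h2.
set z := b u v in h1 h2 *; set w := b v u in h1 h2 *.
set al := b u u in h1 h2; set be := b v v in h1 h2.
(* The combination [h2 - 'i * h1] of the reality conditions at [u + v] and
   ['i u + v] forces [w = z^*]. *)
have : 2%:R * 'i * (w - z^*) =
  (- 'i * ('i * al + z^*) + ('i * w^* + be)) - ('i * (- 'i * al + z) + (- 'i * w + be))
  - 'i * ((al + z^* + (w^* + be)) - (al + z + (w + be))) by ring.
rewrite h1 h2 !subrr mulr0 subr0 => /eqP.
by rewrite !mulf_eq0 pnatr_eq0 (negbTE (@neq0Ci _)) subr_eq0 => /eqP.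
Qed.

End Polarization.

Section InnerProduct.
Variables (R : realType) (H : lmodType R[i]) (ip : H -> H -> R[i]).
Hypothesis hip : is_inner_product ip.

Lemma ip_linearl a x y z : ip (a *: x + y) z = a * ip x z + ip y z.
Proof. by case: hip. Qed.

Lemma ipC x y : ip y x = (ip x y)^*.
Proof. by case: hip. Qed.

Lemma ip0l z : ip 0 z = 0.
Proof.
have e := ip_linearl 1 0 0 z; rewrite scaler0 addr0 mul1r in e.
by apply/(addrI (ip 0 z)); rewrite addr0 -e.
Qed.

Lemma ipDl x y z : ip (x + y) z = ip x z + ip y z.
Proof. by rewrite -{1}[x]scale1r ip_linearl mul1r. Qed.

Lemma ipZl a x z : ip (a *: x) z = a * ip x z.
Proof. by rewrite -[a *: x]addr0 ip_linearl ip0l addr0. Qed.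

Lemma ipNl x z : ip (- x) z = - ip x z.
Proof. by rewrite -scaleN1r ipZl mulN1r. Qed.

Lemma ip_semilinearr a x y z : ip z (a *: x + y) = a^* * ip z x + ip z y.
Proof. by rewrite ipC ip_linearl rmorphD rmorphM /= -!ipC. Qed.

Lemma ip0r z : ip z 0 = 0.
Proof. by rewrite ipC ip0l conjC0. Qed.

Lemma ipDr x y z : ip z (x + y) = ip z x + ip z y.
Proof. by rewrite -{1}[x]scale1r ip_semilinearr conjC1 mul1r. Qed.

Lemma ipNr x z : ip z (- x) = - ip z x.
Proof. by rewrite ipC ipNl rmorphN /= -ipC. Qed.

Lemma is_adjoint_compl (p : H -> H) :
  is_adjoint ip p p -> is_adjoint ip (fun h => h - p h) (fun h => h - p h).
Proof. by move=> adj_p h k; rewrite ipDl ipNl ipDr ipNr adj_p. Qed.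

End InnerProduct.

Section BlockIndices.
Variable n : nat.

Lemma split_lshift (j : 'I_n) : split (lshift n j) = inl j.
Proof. exact: (unsplitK (inl j)). Qed.

Lemma split_rshift (j : 'I_n) : split (rshift n j) = inr j.
Proof. exact: (unsplitK (inr j)). Qed.

Definition fold_split (i : 'I_(n + n)) : 'I_n :=
  match split i with inl k | inr k => k end.

Lemma fold_split_lshift j : fold_split (lshift n j) = j.
Proof. by rewrite /fold_split split_lshift. Qed.

Lemma fold_split_rshift j : fold_split (rshift n j) = j.
Proof. by rewrite /fold_split split_rshift. Qed.

Lemma block_mx_dupE (T : Type) (A : 'M[T]_n) i j :
  block_mx A A A A i j = A (fold_split i) (fold_split j).
Proof.
rewrite -(splitK i) -(splitK j).
by case: (split i) => i'; case: (split j) => j'; rewrite /fold_split !unsplitK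
  /= ?block_mxEul ?block_mxEur ?block_mxEdl ?block_mxEdr.
Qed.

End BlockIndices.

Section OperatorMatrices.
Variables (R : realType) (H : lmodType R[i]) (ip : H -> H -> R[i]).
Hypothesis hip : is_inner_product ip.

Lemma linear_zero_map : linear (fun _ : H => 0 : H).
Proof. by move=> a u v; rewrite scaler0 addr0. Qed.

Lemma ipn_linearl n a (w1 w2 eta : 'I_n -> H) :
  ipn ip (fun k => a *: w1 k + w2 k) eta = a * ipn ip w1 eta + ipn ip w2 eta.
Proof.
by rewrite /ipn mulr_sumr -big_split; apply: eq_bigr => i _; rewrite ip_linearl.
Qed.

Lemma ipn_semilinearr n a (w eta1 eta2 : 'I_n -> H) :
  ipn ip w (fun k => a *: eta1 k + eta2 k) = a^* * ipn ip w eta1 + ipn ip w eta2.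
Proof.
by rewrite /ipn mulr_sumr -big_split; apply: eq_bigr => i _; rewrite ip_semilinearr.
Qed.

Section Entries.
Variables (n : nat) (X : 'M[H -> H]_n).
Hypothesis linX : forall i j, linear (X i j).

Lemma opmx_apply_linear a (xi eta : 'I_n -> H) i :
  opmx_apply X (fun j => a *: xi j + eta j) i =
  a *: opmx_apply X xi i + opmx_apply X eta i.
Proof.
by rewrite /opmx_apply scaler_sumr -big_split; apply: eq_bigr => j _; rewrite linX.
Qed.

Definition delta_vec (j : 'I_n) (u : H) : {ffun 'I_n -> H} :=
  [ffun k => if k == j then u else 0].

Lemma opmx_apply_delta j u i : opmx_apply X (delta_vec j u) i = X i j u.
Proof.
rewrite /opmx_apply (bigD1 j) //= ffunE eqxx big1 ?addr0 // => k /negbTE k_neq.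
by rewrite ffunE k_neq linear_map0.
Qed.

Lemma ipn_delta (w : 'I_n -> H) i v : ipn ip w (delta_vec i v) = ip (w i) v.
Proof.
rewrite /ipn (bigD1 i) //= ffunE eqxx big1 ?addr0 // => k /negbTE k_neq.
by rewrite ffunE k_neq ip0r.
Qed.

Lemma opmx_pos_selfadj : opmx_pos ip X -> opmx_selfadj ip X.
Proof.
move=> posX i j h k.
pose b (xi eta : {ffun 'I_n -> H}) := ipn ip (opmx_apply X xi) eta.
have b_linearl a xi1 xi2 eta :
    b (a *: xi1 + xi2) eta = a * b xi1 eta + b xi2 eta.
  rewrite /b -ipn_linearl; congr ipn; apply: functional_extensionality => l.
  rewrite -opmx_apply_linear; congr opmx_apply.
  by apply: functional_extensionality => m; rewrite !ffunE.
have b_semilinearr a eta1 eta2 xi :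
    b xi (a *: eta1 + eta2) = a^* * b xi eta1 + b xi eta2.
  rewrite /b -ipn_semilinearr; congr ipn.
  by apply: functional_extensionality => l; rewrite !ffunE.
have b_real xi : (b xi xi)^* = b xi xi := geC0_conj (posX xi).
have := polarization_hermitian b_linearl b_semilinearr b_real.
move=> /(_ (delta_vec j k) (delta_vec i h)).
by rewrite /b !ipn_delta !opmx_apply_delta => ->; rewrite -ipC.
Qed.

End Entries.

Definition diag_opmx n (d : 'I_n -> H -> H) : 'M[H -> H]_n :=
  \matrix_(i, j) if i == j then d i else (fun _ => 0).

Lemma opmx_apply_diag n (d : 'I_n -> H -> H) xi i :
  opmx_apply (diag_opmx d) xi i = d i (xi i).
Proof.
rewrite /opmx_apply (bigD1 i) //= mxE eqxx big1 ?addr0 // => j /negbTE j_neq.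
by rewrite mxE eq_sym j_neq.
Qed.

Lemma opmx_apply_mul n (A B : 'M[H -> H]_n) xi :
  (forall i j, linear (A i j)) ->
  opmx_apply (opmx_mul A B) xi = opmx_apply A (opmx_apply B xi).
Proof.
move=> linA; apply: functional_extensionality => i.
rewrite /opmx_apply (eq_bigr (fun j => \sum_k A i k (B k j (xi j)))) => [|j _].
  by rewrite exchange_big; apply: eq_bigr => k _; rewrite linear_map_sum.
by rewrite mxE.
Qed.

Lemma opmx_form_compress n (d : 'I_n -> H -> H) (Y : 'M[H -> H]_n) xi :
  (forall i, linear (d i)) -> (forall i, is_adjoint ip (d i) (d i)) ->
  (forall i j, linear (Y i j)) ->
  let dxi j := d j (xi j) in
  ipn ip (opmx_apply (opmx_mul (diag_opmx d) (opmx_mul Y (diag_opmx d))) xi) xi =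
  ipn ip (opmx_apply Y dxi) dxi.
Proof.
move=> lin_d adj_d linY dxi.
have lin_diag i j : linear (diag_opmx d i j).
  by rewrite mxE; case: eqP => _; [exact: lin_d | exact: linear_zero_map].
rewrite !opmx_apply_mul // /ipn; apply: eq_bigr => i _.
rewrite opmx_apply_diag -adj_d; congr (ip (d i _) _).
by apply: eq_bigr => j _; rewrite opmx_apply_diag.
Qed.

Lemma dsum_ampl n (a b : H -> H) :
  dsum_opmx (ampl n a) (ampl n b) =
  diag_opmx (fun i => if split i is inl _ then a else b).
Proof.
apply/matrixP => i j; rewrite [RHS]mxE -(splitK i) -(splitK j).
case: (split i) => i'; case: (split j) => j';
  rewrite !unsplitK /dsum_opmx /= ?block_mxEul ?block_mxEur ?block_mxEdl
    ?block_mxEdr !mxE ?eq_shift //.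
Qed.

Lemma opmx_form_block_dup n (X : 'M[H -> H]_n) zeta :
  (forall i j, linear (X i j)) ->
  let sigma j := zeta (lshift n j) + zeta (rshift n j) in
  ipn ip (opmx_apply (block_mx X X X X) zeta) zeta = ipn ip (opmx_apply X sigma) sigma.
Proof.
move=> linX sigma.
have apply_block i :
    opmx_apply (block_mx X X X X) zeta i = opmx_apply X sigma (fold_split i).
  rewrite /opmx_apply big_split_ord /= -big_split; apply: eq_bigr => j _.
  by rewrite !block_mx_dupE fold_split_lshift fold_split_rshift linear_mapD.
rewrite /ipn big_split_ord /= -big_split; apply: eq_bigr => j _.
by rewrite /= !apply_block fold_split_lshift fold_split_rshift -ipDr.
Qed.

Lemma opmx_form_compress_block_dup n (a b : H -> H) (X : 'M[H -> H]_n) xi :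
  linear a -> linear b -> is_adjoint ip a a -> is_adjoint ip b b ->
  (forall i j, linear (X i j)) ->
  let P := dsum_opmx (ampl n a) (ampl n b) in
  let sigma j := a (xi (lshift n j)) + b (xi (rshift n j)) in
  ipn ip (opmx_apply (opmx_mul P (opmx_mul (block_mx X X X X) P)) xi) xi =
  ipn ip (opmx_apply X sigma) sigma.
Proof.
move=> lin_a lin_b adj_a adj_b linX P sigma.
rewrite /P dsum_ampl opmx_form_compress.
- rewrite opmx_form_block_dup //; congr (ipn _ (opmx_apply _ _) _).
  1-2: by apply: functional_extensionality => j; rewrite split_lshift split_rshift.
- by move=> i; case: split.
- by move=> i; case: split.
- by move=> i j; rewrite block_mx_dupE.
Qed.

End OperatorMatrices.

Theorem theorem5p3 (R : realType) (H : lmodType R[i]) (ip : H -> H -> R[i])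
  (hip : is_inner_product ip) (hcomp : hcomplete ip)
  (V : (H -> H) -> Prop) (hV : operator_system ip V)
  (p : H -> H) (hpV : V p) (hp : projection ip p)
  (n : nat) (x : 'M[H -> H]_n) (hx : in_Mn V x) :
  let q : H -> H := fun h => h - p h in
  Cn ip V x <->
  C_of ip V (dsum_opmx (ampl n p) (ampl n q)) (block_mx x x x x).
Proof.
move=> q; have [bounded_V _ _ _] := hV; have [_ adj_p] := hp.
have lin_p : linear p := (bounded_V p hpV).1.
have lin_q : linear q by move=> a u v; rewrite /q lin_p scalerBr opprD addrACA.
have adj_q : is_adjoint ip q q := is_adjoint_compl hip adj_p.
have lin_x i j : linear (x i j) := (bounded_V _ (hx i j)).1.
have compress xi := opmx_form_compress_block_dup hip xi lin_p lin_q adj_p adj_q lin_x.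
split=> [[_ pos_x] | [_ _ pos_compressed]].
- have selfadj_x := opmx_pos_selfadj hip lin_x pos_x.
  split=> [i j | i j | xi]; rewrite ?block_mx_dupE ?compress //; exact: pos_x.
- (* [(eta, eta)] is compressed to [p eta + q eta = eta]. *)
  split=> // eta; have := pos_compressed (fun i => eta (fold_split i)).
  rewrite compress /=.
  suff -> : (fun j => p (eta (fold_split (lshift n j))) +
                      q (eta (fold_split (rshift n j)))) = eta by [].
  apply: functional_extensionality => j.
  by rewrite fold_split_lshift fold_split_rshift /q addrC subrK.
Qed.
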